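(* Let $T>0$, let $u:\mathbb{R}\times[0,T]\to\mathbb{R}$ be a bounded continuous function solving the Hunter–Saxton equation in the weak sense, and let $\{x_\alpha\}_{\alpha\in A}$ be a family of characteristics associated to $u$ on $[0,T]$ such that $y(t):=\sup_{\alpha}x_\alpha(t)$ is finite for $t\in[0,T]$. Then $y$ is also a characteristic associated to $u$ on $[0,T]$. The same holds for $\inf_\alpha x_\alpha(t)$ (when finite).
   Context: The Hunter–Saxton equation is $\partial_t u+\partial_x\big[\tfrac12 u^2\big]=\tfrac12\int_{-\infty}^x w^2(y,t)\,dy$, $w=\partial_x u$. A weak solution on $[0,T]$ is a continuous function $u$ such that for each $t$, $u(\cdot,t)$ is absolutely continuous on $\mathbb{R}$ with $\partial_x u=w\in L^\infty([0,T];L^2(\mathbb{R}))$, the map $t\mapsto u(\cdot,t)\in L^2_{loc}(\mathbb{R})$ is absolutely continuous, and the equation holds in the sense of distributions. A characteristic associated to $u$ on $[0,T]$ is a Lipschitz continuous ($C^1$) function $x:[0,T]\to\mathbb{R}$ with $\dot x(t)=u(x(t),t)$ for a.e. $t\in[0,T]$. *)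

From HB Require Import structures.
From mathcomp Require Import all_boot all_order all_algebra.
From mathcomp Require Import all_classical all_reals all_analysis.
Set Implicit Arguments. Unset Strict Implicit. Unset Printing Implicit Defensive.
Import Order.TTheory GRing.Theory Num.Theory.
Import numFieldNormedType.Exports.
Local Open Scope classical_set_scope.
Local Open Scope ring_scope.

(* Functions of (x,t) are curried: u x t. *)
Section HS.
Variable R : realType.
Local Notation mu := (@lebesgue_measure R).

Definition abs_cont_on (a b : R) (f : R -> R) : Prop :=
  forall e : R, 0 < e -> exists2 d : R, 0 < d &
    forall (n : nat) (s t : 'I_n -> R),
      (forall i, a <= s i /\ s i <= t i /\ t i <= b) ->
      (forall i j, i != j -> t i <= s j \/ t j <= s i) ->
      \sum_(i < n) (t i - s i) < d ->
      \sum_(i < n) `|f (t i) - f (s i)| < e.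

Definition abs_cont_R (f : R -> R) : Prop := forall a b, abs_cont_on a b f.

Definition L2dist (a b : R) (f g : R -> R) : R :=
  Num.sqrt (fine (\int[mu]_(x in `[a, b]) ((f x - g x) ^+ 2)%:E)%E).

(* t |-> u(.,t) in L^2_loc(R) is absolutely continuous on [0,T]:
   for every compact [a,b], t |-> u(.,t)|_[a,b] in L^2([a,b]) is
   absolutely continuous. *)
Definition abs_cont_L2loc (T : R) (u : R -> R -> R) : Prop :=
  forall a b : R,
  forall e : R, 0 < e -> exists2 d : R, 0 < d &
    forall (n : nat) (s t : 'I_n -> R),
      (forall i, 0 <= s i /\ s i <= t i /\ t i <= T) ->
      (forall i j, i != j -> t i <= s j \/ t j <= s i) ->
      \sum_(i < n) (t i - s i) < d ->
      \sum_(i < n) L2dist a b (fun x => u x (t i)) (fun x => u x (s i)) < e.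

Definition dx (phi : R -> R -> R) : R -> R -> R :=
  fun x t => derive1 (fun y => phi y t) x.
Definition dt (phi : R -> R -> R) : R -> R -> R :=
  fun x t => derive1 (phi x) t.

Fixpoint Ck (k : nat) (phi : R -> R -> R) : Prop :=
  continuous (fun p : R * R => phi p.1 p.2) /\
  match k with
  | 0 => True
  | k'.+1 => (forall x t, derivable (fun y => phi y t) x 1 /\
                          derivable (phi x) t 1) /\
             Ck k' (dx phi) /\ Ck k' (dt phi)
  end.

Definition test_fun (T : R) (phi : R -> R -> R) : Prop :=
  (forall k, Ck k phi) /\
  exists a b t0 t1 : R, 0 < t0 /\ t1 < T /\
    forall x t, ~ (a <= x <= b /\ t0 <= t <= t1) -> phi x t = 0.

Definition HS_source (w : R -> R -> R) (x t : R) : R :=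
  2^-1 * fine (\int[mu]_(y in `]-oo, x]) ((w y t) ^+ 2)%:E)%E.

Definition HS_weak_solution (T : R) (u : R -> R -> R) : Prop :=
  {within [set p : R * R | 0 <= p.2 <= T],
     continuous (fun p : R * R => u p.1 p.2)} /\
  exists w : R -> R -> R,
    (forall t, 0 <= t <= T ->
       abs_cont_R (fun x => u x t) /\
       measurable_fun setT (fun y => w y t) /\
       {ae mu, forall x, derivable (fun y => u y t) x 1 /\
                         derive1 (fun y => u y t) x = w x t}) /\
    (* w in L^infty([0,T]; L^2(R)) *)
    measurable_fun setT (fun p : R * R => w p.1 p.2) /\
    (forall t, 0 <= t <= T ->
       (\int[mu]_(y in setT) ((w y t) ^+ 2)%:E < +oo)%E) /\
    (exists C : R, {ae mu, forall t, 0 <= t <= T ->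
       (\int[mu]_(y in setT) ((w y t) ^+ 2)%:E <= C%:E)%E}) /\
    abs_cont_L2loc T u /\
    (forall phi, test_fun T phi ->
       (\int[mu]_(t in `[0%R, T]) \int[mu]_(x in setT)
          (u x t * dt phi x t + 2^-1 * (u x t) ^+ 2 * dx phi x t
           + HS_source w x t * phi x t)%:E = 0)%E).

Definition characteristic (T : R) (u : R -> R -> R) (x : R -> R) : Prop :=
  (exists L : R, forall s t, 0 <= s <= T -> 0 <= t <= T ->
     `|x s - x t| <= L * `|s - t|) /\
  {ae mu, forall t, 0 <= t <= T ->
     derivable x t 1 /\ derive1 x t = u (x t) t}.

End HS.

From HB Require Import structures.
From mathcomp Require Import all_boot all_order all_algebra.
From mathcomp Require Import all_classical all_reals all_analysis.
From mathcomp Require Import measurable_realfun ring lra.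
Set Implicit Arguments. Unset Strict Implicit. Unset Printing Implicit Defensive.
Import Order.TTheory GRing.Theory Num.Theory.
Import numFieldNormedType.Exports.
Local Open Scope classical_set_scope.
Local Open Scope ring_scope.

(* If |u| <= M, every characteristic is M-Lipschitz: a Lipschitz function whose
   derivative lies a.e. in [lo, hi] has increments between lo and hi times the
   length of the interval.  This is proved without integration: the null set
   where the derivative is not controlled is covered by an open set U of small
   measure, whose distribution function absorbs the increments over U, and real
   induction handles the other points.  Hence y = sup_a x_a is M-Lipschitz.  At
   an interior time t0, continuity of u at (y t0, t0) confines the slopes near
   t0 of every x_a close to y at t0 to u (y t0) t0 +- e; squeezing y between
   such x_a shows that y is differentiable at every interior time with
   y' = u (y, t).  The infimum is the supremum for the reflected equation
   v z t = - u (- z) t. *)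

Section Characteristics.
Variable R : realType.
Local Notation mu := (@lebesgue_measure R).

Lemma derivable_linear_approx (f : R -> R) (t : R) : derivable f t 1 ->
  forall e, 0 < e -> exists2 d, 0 < d & forall r, `|r - t| < d ->
    `|f r - f t - derive1 f t * (r - t)| <= e * `|r - t|.
Proof.
move=> df e e0; move: df; rewrite /derivable.
have -> : (fun h : R => h^-1 *: ((f \o shift t) h%:A - f t)) =
          (fun h => h^-1 *: (f (h + t) - f t)).
  by apply: funext => h; rewrite /= /shift /= -[h%:A]/(h * 1) mulr1.
rewrite -/(derive1 f t) => /cvgrPdist_lt /(_ e e0).
rewrite /dnbhs /within /= => /nbhs_ballP [d d0 Hd].
exists d => // r hr.
have [->|hrt] := eqVneq r t; first by rewrite !subrr !(mulr0, subr0, normr0).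
have rt0 : r - t != 0 by rewrite subr_eq0.
have := Hd (r - t); rewrite -ball_normE /ball_ /= sub0r normrN subrK.
move=> /(_ hr rt0) /ltW.
have -> : derive1 f t - (r - t)^-1 *: (f r - f t) =
          - ((f r - f t - derive1 f t * (r - t)) / (r - t)).
  by rewrite /GRing.scale /=; field.
by rewrite normrN normrM normfV ler_pdivrMr ?normr_gt0 // mulrC.
Qed.

Lemma linear_approx_derivable (f : R -> R) (t c : R) :
  (forall e, 0 < e -> exists2 d, 0 < d & forall r, `|r - t| < d ->
    `|f r - f t - c * (r - t)| <= e * `|r - t|) ->
  derivable f t 1 /\ derive1 f t = c.
Proof.
move=> H.
have Hc : (fun h : R => h^-1 *: ((f \o shift t) (h *: 1) - f t)) @ 0^' --> c.
  apply/cvgrPdist_le => e e0; have [d d0 Hd] := H e e0.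
  rewrite /dnbhs /within /=; apply/nbhs_ballP; exists d => // h.
  rewrite -ball_normE /ball_ /= sub0r normrN => hh h0.
  have := Hd (h + t); rewrite addrK /shift /= -[h *: 1]/(h * 1) mulr1 => /(_ hh).
  have -> : c - h^-1 *: (f (h + t) - f t) = - ((f (h + t) - f t - c * h) / h).
    by rewrite /GRing.scale /=; field.
  by rewrite normrN normrM normfV ler_pdivrMr ?normr_gt0 // mulrC.
split; first by apply/cvg_ex; exists c.
by rewrite derive1E; exact: cvg_lim.
Qed.

Lemma derivable_forward_slope_le (f : R -> R) (t hi : R) :
  derivable f t 1 -> derive1 f t <= hi ->
  forall e, 0 < e -> exists2 d, 0 < d &
    forall r, t < r < t + d -> f r - f t <= (hi + e) * (r - t).
Proof.
move=> df dhi e e0; have [d d0 Hd] := derivable_linear_approx df (e := e) e0.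
exists d => // r /andP[tr rtd].
have rt : `|r - t| = r - t by rewrite ger0_norm // subr_ge0 ltW.
have := Hd r; rewrite rt => /(_ ltac:(lra)).
have := ler_norm (f r - f t - derive1 f t * (r - t)).
have : derive1 f t * (r - t) <= hi * (r - t) by rewrite ler_wpM2r // subr_ge0 ltW.
lra.
Qed.

Lemma ae_nullP (Q : R -> Prop) : {ae mu, forall t, Q t} <->
  exists N : set R, [/\ measurable N, mu N = 0%E & forall t, ~ N t -> Q t].
Proof.
split=> [[N [mN N0 QN]]|[N [mN N0 NQ]]]; exists N; split => // t.
  by move=> Nt; apply: contrapT => /QN.
by move=> /= Qt; apply: contrapT => /NQ.
Qed.

Lemma real_induction (a b : R) (P : R -> Prop) : a <= b -> P a ->
  (forall s, a < s <= b -> (forall r, a <= r < s -> P r) -> P s) ->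
  (forall s, a <= s < b -> P s -> exists2 d, 0 < d &
     forall r, s < r < s + d -> r <= b -> P r) ->
  P b.
Proof.
move=> ab Pa closed step.
pose S := [set t | a <= t <= b /\ forall r, a <= r <= t -> P r].
have Sa : S a.
  split=> [|r /andP[ar ra]]; first by rewrite lexx ab.
  by have -> : r = a by apply/le_anti; rewrite ar ra.
have supS : has_sup S by split; [exists a|exists b => t [/andP[]]].
set s := sup S.
have as_ : a <= s by exact: sup_upper_bound.
have sb : s <= b by apply: ge_sup; [exists a|move=> t [/andP[]]].
have below : forall r, a <= r < s -> P r.
  move=> r /andP[ar rs].
  have sr0 : 0 < s - r by rewrite subr_gt0.
  have [t [/andP[_ _] Pt] st] := sup_adherent sr0 supS.
  by apply: Pt; rewrite ar /=; move: st; rewrite /s; lra.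
have Ps : P s.
  have [<-//|as_ne] := eqVneq a s.
  by apply: closed => //; rewrite sb andbT lt_neqAle as_ne as_.
have Ss : S s.
  split=> [|r /andP[ar rs]]; first by rewrite as_ sb.
  have [rs'|sr] := ltP r s; first by apply: below; rewrite ar rs'.
  by have -> : r = s by apply/le_anti; rewrite rs sr.
suff <- : s = b by [].
apply/le_anti; rewrite sb /= leNgt; apply/negP => sb'.
have sab : a <= s < b by rewrite as_ sb'.
have [d d0 Hd] := step s sab Ps.
set t := Num.min b (s + d / 2).
have st : s < t by rewrite lt_min sb' ltrDl divr_gt0.
have St : S t.
  split=> [|r /andP[ar rt]]; first by rewrite ge_min lexx /=; lra.
  have [rs|sr] := leP r s; first by apply: Ss.2; rewrite ar rs.
  apply: Hd; last by move: rt; rewrite le_min => /andP[].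
  by rewrite sr /=; move: rt; rewrite le_min => /andP[_]; lra.
by have := sup_upper_bound supS St; rewrite -/s; lra.
Qed.

Lemma open_null_cover (N : set R) (e : R) :
  measurable N -> mu N = 0%E -> 0 < e ->
  exists U : set R, [/\ open U, N `<=` U & (mu U <= e%:E)%E].
Proof.
move=> mN N0 e0.
have Nfin : (mu N < +oo)%E by rewrite N0 ltry.
have [U [oU NU UNe]] := lebesgue_regularity_outer mN Nfin e0.
exists U; split => //; apply: le_trans (ltW UNe).
have UE : U = N `|` (U `\` N).
  by apply/seteqP; split=> [x Ux|x [/NU//|[]//]]; have [Nx|nNx] := pselect (N x); [left|right].
have mUN : measurable (U `\` N) by apply: measurableD => //; exact: open_measurable.
rewrite {1}UE measureU //; last by apply/seteqP; split=> x // [? []].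
by rewrite [X in (X + _)%E](_ : _ = 0%E) ?add0e.
Qed.

Definition measure_cdf (U : set R) (t : R) : R := fine (mu (U `&` `]-oo, t])).

Section MeasureCdf.
Variable U : set R.
Hypotheses (mU : measurable U) (finU : (mu U < +oo)%E).

Let fin_measureI (A : set R) : measurable A -> mu (U `&` A) \is a fin_num.
Proof.
move=> mA; rewrite ge0_fin_numE ?measure_ge0 //; apply: le_lt_trans finU.
by apply: le_measure; rewrite ?inE //; exact: measurableI.
Qed.

Lemma measure_cdfB (t s : R) : t <= s ->
  measure_cdf U s - measure_cdf U t = fine (mu (U `&` `]t, s])).
Proof.
move=> ts.
have E : U `&` `]-oo, s] = (U `&` `]-oo, t]) `|` (U `&` `]t, s]).
  apply/seteqP; split=> x /=; rewrite !in_itv /=.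
    by move=> [Ux xs]; have [xt|tx] := leP x t; [left|right; split=> //; apply/andP].
  by move=> [[Ux xt]|[Ux /andP[_ xs]]]; split=> //; apply: le_trans xt ts.
have D : (U `&` `]-oo, t]) `&` (U `&` `]t, s]) = set0.
  apply/seteqP; split=> x //=; rewrite !in_itv /= => -[[_ xt] [_ /andP[tx _]]].
  by move: (lt_le_trans tx xt); rewrite ltxx.
rewrite /measure_cdf E measureU ?D //; try exact: measurableI.
by rewrite fineD ?fin_measureI // addrAC subrr add0r.
Qed.

Lemma measure_cdf_increment (t s : R) : t <= s ->
  0 <= measure_cdf U s - measure_cdf U t <= s - t.
Proof.
move=> ts; rewrite measure_cdfB // fine_ge0 ?measure_ge0 //=.
have Itv : (mu (U `&` `]t, s]) <= mu `]t, s])%E.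
  by apply: le_measure; rewrite ?inE //; exact: measurableI.
rewrite -lee_fin fineK ?fin_measureI //; apply: le_trans Itv _.
by rewrite lebesgue_measure_itv /=; case: ltP => // _; rewrite lee_fin subr_ge0.
Qed.

Lemma measure_cdf_increment_open (t s : R) : t <= s ->
  (forall x, t < x <= s -> U x) -> measure_cdf U s - measure_cdf U t = s - t.
Proof.
move=> ts tsU; rewrite measure_cdfB //.
have -> : U `&` `]t, s] = `]t, s]%classic.
  by apply/seteqP; split=> [x []//|x tx]; split=> //; apply: tsU; rewrite /= in_itv in tx.
rewrite lebesgue_measure_itv /=; case: ltP => //=.
by rewrite lee_fin => st; apply/eqP; rewrite eq_sym subr_eq0 eq_le ts st.
Qed.

Lemma measure_cdf_increment_le_measure (t s : R) : t <= s ->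
  ((measure_cdf U s - measure_cdf U t)%:E <= mu U)%E.
Proof.
move=> ts; rewrite measure_cdfB // fineK ?fin_measureI //.
by apply: le_measure; rewrite ?inE //; exact: measurableI.
Qed.

End MeasureCdf.

Lemma le0_of_left_lipschitz (g : R -> R) (a s C : R) : a < s -> 0 <= C ->
  (forall r, a <= r < s -> g r <= 0) ->
  (forall r, a <= r <= s -> g s - g r <= C * (s - r)) -> g s <= 0.
Proof.
move=> as_ C0 gle0 gC; apply/ler_addgt0Pr => eta eta0; rewrite add0r.
have q0 : 0 < eta / (C + 1) by rewrite divr_gt0 // ltr_wpDl.
set r := Num.max a (s - eta / (C + 1)).
have ar : a <= r by rewrite le_max lexx.
have rs : r < s by rewrite gt_max as_ /= ltrBlDr ltrDl.
have sr : s - r <= eta / (C + 1) by rewrite lerBlDr -lerBlDl le_max lexx orbT.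
have := gle0 r ltac:(by rewrite ar rs); have := gC r ltac:(by rewrite ar ltW).
have : (C + 1) * (s - r) <= eta.
  by rewrite mulrC -ler_pdivlMr // ltr_wpDl.
nra.
Qed.

Lemma increment_le_off_open (a b L K : R) (f phi : R -> R) (U : set R) :
  a <= b -> open U ->
  (forall s t, a <= s <= b -> a <= t <= b -> `|f s - f t| <= L * `|s - t|) ->
  (forall t s, a <= t -> t <= s -> s <= b -> 0 <= phi s - phi t <= s - t) ->
  (forall t s, a <= t -> t <= s -> s <= b -> (forall x, t < x <= s -> U x) ->
     phi s - phi t = s - t) ->
  (forall t, a <= t < b -> ~ U t -> exists2 d, 0 < d &
     forall r, t < r < t + d -> f r - f t <= K * (r - t)) ->
  f b - f a <= K * (b - a) + (`|L| + `|K|) * (phi b - phi a).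
Proof.
(* phi grows at full speed across U, where the slope of f is only bounded by L. *)
move=> ab oU fL phi_incr phiU slopeK.
set C := `|L| + `|K|.
have C0 : 0 <= C by rewrite addr_ge0.
have NK : - K <= `|K| by rewrite -normrN ler_norm.
pose g t := f t - f a - K * (t - a) - C * (phi t - phi a).
have fincr r s : a <= r -> r <= s -> s <= b -> f s - f r <= `|L| * (s - r).
  move=> ar rs sb; have := fL s r ltac:(lra) ltac:(lra).
  rewrite (ger0_norm (_ : 0 <= s - r)) ?subr_ge0 //.
  have := ler_norm (f s - f r).
  have : L * (s - r) <= `|L| * (s - r) by rewrite ler_wpM2r ?subr_ge0 ?ler_norm.
  lra.
suff : g b <= 0 by rewrite /g; lra.
apply: (real_induction (P := fun r => g r <= 0) ab)
  => [|s /andP[as_ sb] gle0|s /andP[as_ sb] gs].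
- by rewrite /g !subrr mulr0 mulr0 !subr0.
- have CC : 0 <= C + C by rewrite addr_ge0.
  apply: (le0_of_left_lipschitz as_ CC gle0) => r /andP[ar rs].
  have := fincr r s ar rs sb; have /andP[? ?] := phi_incr r s ar rs sb.
  have : C * (phi s - phi r) >= 0 by rewrite mulr_ge0.
  have : - K * (s - r) <= `|K| * (s - r) by rewrite ler_wpM2r ?subr_ge0.
  have : 0 <= C * (s - r) by rewrite mulr_ge0 ?subr_ge0.
  rewrite /g /C; lra.
have [Us|nUs] := pselect (U s).
  move: oU; rewrite openE => /(_ s Us) /nbhs_ballP [d d0 ballU].
  exists d => // r /andP[sr rsd] rb.
  have phi_rs : phi r - phi s = r - s.
    apply: (phiU s r as_ (ltW sr) rb) => x /andP[sx xr]; apply: ballU.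
    rewrite -ball_normE /ball_ /= ltr_norml; apply/andP; split; lra.
  have := fincr s r as_ (ltW sr) rb.
  have : - K * (r - s) <= `|K| * (r - s) by rewrite ler_wpM2r // subr_ge0 ltW.
  have : C * (phi r - phi a) = C * (phi s - phi a) + C * (r - s) by rewrite -phi_rs; ring.
  by move: gs; rewrite /g /C; lra.
have [d d0 slope] := slopeK s ltac:(by rewrite as_) nUs.
exists d => // r /andP[sr rsd] rb.
have := slope r ltac:(by rewrite sr).
have /andP[? _] := phi_incr s r as_ (ltW sr) rb.
have : C * (phi r - phi s) >= 0 by rewrite mulr_ge0.
by move: gs; rewrite /g; lra.
Qed.

Lemma increment_le_of_forward_slope (a b K L : R) (f : R -> R) (N : set R) :
  a <= b -> measurable N -> mu N = 0%E ->
  (forall s t, a <= s <= b -> a <= t <= b -> `|f s - f t| <= L * `|s - t|) ->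
  (forall t, a <= t < b -> ~ N t -> forall e, 0 < e -> exists2 d, 0 < d &
     forall r, t < r < t + d -> f r - f t <= (K + e) * (r - t)) ->
  f b - f a <= K * (b - a).
Proof.
move=> ab mN N0 fL slope; apply/ler_addgt0Pr => eta eta0.
set e := eta / 2 / (b - a + 1).
have e0 : 0 < e by rewrite !divr_gt0 //; lra.
have e_ba : e * (b - a) <= eta / 2.
  suff : e * (b - a + 1) = eta / 2 by lra.
  by rewrite divfK // gt_eqF //; lra.
set C := `|L| + `|K + e|.
have C0 : 0 <= C by rewrite addr_ge0.
set e' := eta / 2 / (C + 1).
have e'0 : 0 < e' by rewrite !divr_gt0 //; lra.
have C_e' : C * e' <= eta / 2.
  suff : (C + 1) * e' = eta / 2 by lra.
  by rewrite mulrC divfK // gt_eqF //; lra.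
have [U [oU NU Ue']] := open_null_cover mN N0 e'0.
have mU : measurable U := open_measurable oU.
have finU : (mu U < +oo)%E by apply: le_lt_trans Ue' (ltry _).
have := increment_le_off_open (K := K + e) (phi := measure_cdf U) ab oU fL
  (fun t s at_ ts sb => measure_cdf_increment mU finU ts)
  (fun t s at_ ts sb => measure_cdf_increment_open mU finU ts)
  (fun t tab nUt => slope t tab (fun Nt => nUt (NU t Nt)) e e0).
have cdf_ab : measure_cdf U b - measure_cdf U a <= e'.
  by rewrite -lee_fin; apply: le_trans Ue'; exact: measure_cdf_increment_le_measure.
have : C * (measure_cdf U b - measure_cdf U a) <= C * e' by rewrite ler_wpM2l.
rewrite -/C; lra.
Qed.

Lemma lipschitz_increment_bounds (a b lo hi L : R) (f : R -> R) (N : set R) :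
  a <= b -> measurable N -> mu N = 0%E ->
  (forall s t, a <= s <= b -> a <= t <= b -> `|f s - f t| <= L * `|s - t|) ->
  (forall t, a <= t < b -> ~ N t -> derivable f t 1 /\ lo <= derive1 f t <= hi) ->
  lo * (b - a) <= f b - f a <= hi * (b - a).
Proof.
move=> ab mN N0 fL df; apply/andP; split.
  suff : (- f) b - (- f) a <= - lo * (b - a) by rewrite !fctE; lra.
  apply: (increment_le_of_forward_slope ab mN N0) => [s t sab tab|t tab nNt].
    by rewrite !fctE -opprD normrN; exact: fL.
  have [dft /andP[lo_df _]] := df t tab nNt.
  apply: derivable_forward_slope_le; first exact: derivableN.
  by rewrite derive1N // lerN2.
apply: (increment_le_of_forward_slope ab mN N0 fL) => t tab nNt.
have [dft /andP[_ df_hi]] := df t tab nNt.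
exact: derivable_forward_slope_le.
Qed.

Definition strip_continuous (T : R) (u : R -> R -> R) : Prop :=
  forall x0 t0, 0 <= t0 <= T -> forall e, 0 < e -> exists2 d, 0 < d &
    forall x t, 0 <= t <= T -> `|x - x0| < d -> `|t - t0| < d ->
      `|u x t - u x0 t0| < e.

Lemma within_continuous_strip_continuous (T : R) (u : R -> R -> R) :
  {within [set p : R * R | 0 <= p.2 <= T], continuous (fun p : R * R => u p.1 p.2)} ->
  strip_continuous T u.
Proof.
move=> uc x0 t0 t0T e e0.
have /cvgrPdist_lt /(_ e e0) near_subspace := uc (x0, t0).
have : within [set p : R * R | 0 <= p.2 <= T] (nbhs (x0, t0))
    (fun p : R * R => `|u x0 t0 - u p.1 p.2| < e) by rewrite nbhs_subspace_in.
rewrite /within /= => /nbhs_ballP [d d0 Hd].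
exists d => // x t tT xx0 tt0; rewrite distrC; apply: (Hd (x, t)) => //.
by split; rewrite /= -ball_normE /ball_ /= distrC.
Qed.

Lemma strip_continuous_reflect (T : R) (u : R -> R -> R) :
  strip_continuous T u -> strip_continuous T (fun z t => - u (- z) t).
Proof.
move=> uc x0 t0 t0T e e0; have [d d0 Hd] := uc (- x0) t0 t0T e e0.
exists d => // x t tT xx0 tt0; rewrite -opprD normrN; apply: Hd => //.
by rewrite -opprD normrN.
Qed.

Lemma characteristic_reflect (T : R) (u : R -> R -> R) (x : R -> R) :
  characteristic T u x ->
  characteristic T (fun z t => - u (- z) t) (fun t => - x t).
Proof.
move=> [[L xL] /ae_nullP [N [mN N0 dx]]]; split.
  by exists L => s t sT tT; rewrite -opprD normrN; exact: xL.
apply/ae_nullP; exists N; split => // t nNt tT.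
have [dxt dxtE] := dx t nNt tT.
by split; [exact: derivableN|rewrite (derive1N dxt) dxtE opprK].
Qed.

Section OneCharacteristic.
Variables (T : R) (u : R -> R -> R) (x : R -> R).
Hypothesis x_char : characteristic T u x.

Lemma characteristic_increment_window (lo hi a b : R) :
  0 <= a -> a <= b -> b <= T ->
  (forall s, a <= s <= b -> lo <= u (x s) s <= hi) ->
  lo * (b - a) <= x b - x a <= hi * (b - a).
Proof.
case: x_char => [[L xL] /ae_nullP [N [mN N0 dx]]] a0 ab bT u_bounds.
apply: (lipschitz_increment_bounds ab mN N0)
  => [s t /andP[as_ sb] /andP[at_ tb]|t /andP[at_ tb] nNt].
  by apply: xL; apply/andP; split; lra.
have [dxt ->] := dx t nNt ltac:(by apply/andP; split; lra).
by split=> //; apply: u_bounds; apply/andP; split; lra.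
Qed.

Lemma characteristic_lipschitz (M : R) :
  (forall z t, 0 <= t <= T -> `|u z t| <= M) ->
  forall s t, 0 <= s <= T -> 0 <= t <= T -> `|x s - x t| <= M * `|s - t|.
Proof.
move=> uM.
suff incr p q : 0 <= p -> p <= q -> q <= T -> `|x q - x p| <= M * (q - p).
  move=> s t /andP[s0 sT] /andP[t0 tT]; have [st|ts] := leP s t.
    by rewrite distrC (distrC s) [`|t - s|]ger0_norm ?subr_ge0 // incr.
  by rewrite [`|s - t|]ger0_norm ?subr_ge0 ?incr // ltW.
move=> p0 pq qT; rewrite ler_norml -mulNr.
apply: characteristic_increment_window => // s /andP[ps sq].
by rewrite -ler_norml; apply: uM; apply/andP; split; lra.
Qed.

Lemma characteristic_increment_near (M y0 t0 c e rho t : R) : 0 <= M ->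
  (forall r s, 0 <= r <= T -> 0 <= s <= T -> `|x r - x s| <= M * `|r - s|) ->
  (forall z s, 0 <= s <= T -> `|z - y0| < rho -> `|s - t0| < rho -> `|u z s - c| < e) ->
  0 <= t0 <= T -> 0 <= t <= T -> `|x t0 - y0| < rho / 2 -> 2 * (M + 1) * `|t - t0| < rho ->
  `|x t - x t0 - c * (t - t0)| <= e * `|t - t0|.
Proof.
move=> M0 xM u_near /andP[t00 t0T] /andP[t_0 tT] x0y0 small.
set h := `|t - t0| in small *.
have h0 : 0 <= h := normr_ge0 _.
have Mh : 0 <= M * h by rewrite mulr_ge0.
have window p q : 0 <= p -> p <= q -> q <= T -> p <= t0 <= q -> q - p <= h ->
    (c - e) * (q - p) <= x q - x p <= (c + e) * (q - p).
  move=> p0 pq qT /andP[pt0 t0q] qph.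
  apply: characteristic_increment_window => // s /andP[ps sq].
  have sT : 0 <= s <= T by apply/andP; split; lra.
  have st0 : `|s - t0| <= h by rewrite ler_norml; apply/andP; split; lra.
  have xst0 := xM s t0 sT ltac:(by apply/andP).
  have tri := ler_distD (x t0) (x s) y0.
  have Mst0 : M * `|s - t0| <= M * h by rewrite ler_wpM2l.
  have /u_near : `|x s - y0| < rho by lra.
  by move=> /(_ s sT ltac:(lra)); rewrite ltr_norml => /andP[? ?]; apply/andP; split; lra.
have [t0t|tt0] := leP t0 t.
  have ht : h = t - t0 by rewrite /h ger0_norm // subr_ge0.
  have /andP[? ?] := window t0 t t00 t0t tT ltac:(by rewrite lexx) ltac:(lra).
  by rewrite ler_norml ht; apply/andP; split; lra.
have ht : h = t0 - t by rewrite /h distrC ger0_norm // subr_ge0 ltW.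
have /andP[? ?] := window t t0 t_0 (ltW tt0) t0T ltac:(by rewrite lexx ltW) ltac:(lra).
by rewrite ler_norml ht; apply/andP; split; lra.
Qed.

End OneCharacteristic.

Lemma sup_lipschitz (A : Type) (D : set R) (M : R) (xs : A -> R -> R) :
  (forall t, D t -> has_sup (range (fun a => xs a t))) ->
  (forall a s t, D s -> D t -> `|xs a s - xs a t| <= M * `|s - t|) ->
  forall s t, D s -> D t ->
    `|sup (range (fun a => xs a s)) - sup (range (fun a => xs a t))| <= M * `|s - t|.
Proof.
move=> xs_sup xsM.
suff sup_le s t : D s -> D t ->
    sup (range (fun a => xs a s)) <= sup (range (fun a => xs a t)) + M * `|s - t|.
  move=> s t Ds Dt; have := sup_le s t Ds Dt; have := sup_le t s Dt Ds.
  by rewrite distrC ler_norml; lra.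
move=> Ds Dt; apply: ge_sup; first by case: (xs_sup s Ds).
move=> _ [a _ <-]; have := xsM a s t Ds Dt; rewrite ler_norml => /andP[_].
have : xs a t <= sup (range (fun a => xs a t)).
  by apply: (sup_upper_bound (xs_sup t Dt)); exists a.
lra.
Qed.

Section SupCharacteristic.
Variables (T M : R) (u : R -> R -> R) (A : Type) (xs : A -> R -> R).
Hypotheses (T0 : 0 < T) (uM : forall z t, 0 <= t <= T -> `|u z t| <= M)
  (u_cont : strip_continuous T u) (xs_char : forall a, characteristic T u (xs a))
  (xs_sup : forall t, 0 <= t <= T -> has_sup (range (fun a => xs a t))).

Let y t := sup (range (fun a => xs a t)).

Let M0 : 0 <= M.
Proof.
have T0' : (0 : R) <= 0 <= T by rewrite lexx ltW.
exact: le_trans (normr_ge0 _) (uM 0 T0').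
Qed.

Let xs_lip a := characteristic_lipschitz (xs_char a) uM.

Let y_lip s t : 0 <= s <= T -> 0 <= t <= T -> `|y s - y t| <= M * `|s - t|.
Proof. exact: (sup_lipschitz (D := fun t => 0 <= t <= T)). Qed.

Let le_y a t : 0 <= t <= T -> xs a t <= y t.
Proof. by move=> tT; apply: (sup_upper_bound (xs_sup tT)); exists a. Qed.

Let y_approx t eta : 0 <= t <= T -> 0 < eta -> exists a, y t - eta < xs a t.
Proof. by move=> tT eta0; have [_ [a _ <-] ?] := sup_adherent eta0 (xs_sup tT); exists a. Qed.

Lemma sup_increment_near (t0 t c e rho : R) : 0 <= t0 <= T -> 0 <= t <= T ->
  (forall z s, 0 <= s <= T -> `|z - y t0| < rho -> `|s - t0| < rho -> `|u z s - c| < e) ->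
  8 * (M + 1) * `|t - t0| < rho ->
  `|y t - y t0 - c * (t - t0)| <= e * `|t - t0|.
Proof.
move=> t0T tT u_near small.
set h := `|t - t0| in small *.
have h0 : 0 <= h := normr_ge0 _.
have Mh : 0 <= M * h by rewrite mulr_ge0.
have small2 : 2 * (M + 1) * h < rho by lra.
apply/ler_addgt0Pr => eta' eta'0.
set eta := Num.min eta' (rho / 4).
have eta0 : 0 < eta by rewrite lt_min eta'0 divr_gt0 //; lra.
have eta_le' : eta <= eta' by rewrite ge_min lexx.
have eta_rho : eta <= rho / 4 by rewrite ge_min lexx orbT.
have [a ya] := y_approx t0T eta0.
have [b yb] := y_approx tT eta0.
have near a' : `|xs a' t0 - y t0| < rho / 2 ->
    `|xs a' t - xs a' t0 - c * (t - t0)| <= e * h.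
  by move=> near0; apply: (characteristic_increment_near (xs_char a') M0 (xs_lip a') u_near).
have xa_t0 := le_y a t0T; have xa_t := le_y a tT.
have xb_t0 := le_y b t0T; have xb_t := le_y b tT.
have dist_a : `|xs a t0 - y t0| < rho / 2.
  by rewrite distrC ger0_norm ?subr_ge0 //; lra.
have := near a dist_a; rewrite ler_norml => /andP[na1 na2].
have := xs_lip b tT t0T; rewrite -/h ler_norml => /andP[xb1 xb2].
have := y_lip tT t0T; rewrite -/h ler_norml => /andP[y1 y2].
have dist_b : `|xs b t0 - y t0| < rho / 2.
  by rewrite distrC ger0_norm ?subr_ge0 //; lra.
have := near b dist_b; rewrite ler_norml => /andP[nb1 nb2].
by rewrite ler_norml; apply/andP; split; lra.
Qed.

Lemma sup_derivable (t0 : R) : 0 < t0 < T ->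
  derivable y t0 1 /\ derive1 y t0 = u (y t0) t0.
Proof.
move=> /andP[t0_0 t0_T]; have t0T : 0 <= t0 <= T by rewrite !ltW.
apply: linear_approx_derivable => e e0.
have [rho rho0 u_near] := u_cont (y t0) t0T e0.
set d := Num.min (Num.min t0 (T - t0)) (rho / (8 * (M + 1))).
have d0 : 0 < d.
  rewrite !lt_min t0_0 subr_gt0 t0_T divr_gt0 //; have := M0; lra.
exists d => // t; rewrite !lt_min => /andP[/andP[tt0 tT0] trho].
have tT : 0 <= t <= T by move: tt0 tT0; rewrite !ltr_norml; lra.
apply: (sup_increment_near t0T tT u_near).
by rewrite mulrC -ltr_pdivlMr //; have := M0; lra.
Qed.

Lemma sup_characteristic : characteristic T u y.
Proof.
split; first by exists M; exact: y_lip.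
apply/ae_nullP; exists ([set 0] `|` [set T]); split.
- by apply: measurableU; exact: measurable_set1.
- apply/eqP; rewrite eq_le measure_ge0 andbT.
  apply: le_trans (measureU2 mu (measurable_set1 (0 : R)) (measurable_set1 T)) _.
  by rewrite [X in (X + _ <= _)%E]lebesgue_measure_set1
    [X in (_ + X <= _)%E]lebesgue_measure_set1 adde0.
move=> t not_ends /andP[t0 tT]; apply: sup_derivable.
by rewrite !lt_neqAle t0 tT !andbT; apply/andP; split; apply/eqP => ends;
  apply: not_ends; [left|right].
Qed.

End SupCharacteristic.
End Characteristics.

Theorem lemma3p3 (R : realType) (T : R) (u : R -> R -> R)
  (A : Type) (xs : A -> R -> R) :
  0 < T ->
  (exists M : R, forall x t, 0 <= t <= T -> `|u x t| <= M) ->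
  HS_weak_solution T u ->
  (forall a, characteristic T u (xs a)) ->
  ((forall t, 0 <= t <= T -> has_sup (range (fun a => xs a t))) ->
     characteristic T u (fun t => sup (range (fun a => xs a t)))) /\
  ((forall t, 0 <= t <= T -> has_inf (range (fun a => xs a t))) ->
     characteristic T u (fun t => inf (range (fun a => xs a t)))).
Proof.
move=> T0 [M uM] [/within_continuous_strip_continuous u_cont _] xs_char.
split=> [xs_sup|xs_inf]; first exact: (sup_characteristic T0 uM u_cont xs_char xs_sup).
have rangeN t : range (fun a => - xs a t) = -%R @` range (fun a => xs a t).
  by apply/seteqP; split=> [_ [a _ <-]|_ [_ [a _ <-] <-]]; [exists (xs a t)|exists a].
have vM z t : 0 <= t <= T -> `|- u (- z) t| <= M by rewrite normrN; exact: uM.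
have sup_reflected : characteristic T (fun z t => - u (- z) t)
    (fun t => sup (range (fun a => - xs a t))).
  apply: (sup_characteristic T0 vM (strip_continuous_reflect u_cont))
    (fun a => characteristic_reflect (xs_char a)) _ => t tT.
  by rewrite rangeN; apply/has_inf_supN; exact: xs_inf.
have := characteristic_reflect sup_reflected.
have -> : (fun z t => - - u (- - z) t) = u.
  by apply/funext => z; apply/funext => t; rewrite !opprK.
by under eq_fun do rewrite rangeN.
Qed.
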